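(* Let $\mathbb{F}$ be a field, let $B_1,\dots,B_d$ be $n\times n$ matrices, $P=B_1\boxtimes\cdots\boxtimes B_d$, and let $M$ be an $n^d\times n^d$ matrix. Then for every $\kappa\subseteq[d]$, \[(PM)^{\top_\kappa}=L\,M^{\top_\kappa}R,\qquad L=\mathop{\boxtimes}_{k=1}^d L_k,\ \ R=\mathop{\boxtimes}_{k=1}^d R_k,\] where $L_k=I_n$, $R_k=B_k^{\mathsf T}$ if $k\in\kappa$, and $L_k=B_k$, $R_k=I_n$ if $k\notin\kappa$. Moreover, if $B_1,\dots,B_d$ are nonsingular then $\mathrm{rank}((PM)^{\top_\kappa})=\mathrm{rank}(M^{\top_\kappa})$.
   Context: $\boxtimes$ is the Kronecker product; rows and columns of $n^d\times n^d$ matrices are indexed by $[n]^d$ consistently with the Kronecker product. For $k\in[d]$, $M^{\top_k}$ swaps the $k$-th row index with the $k$-th column index; $M^{\top_\kappa}$ composes these over $k\in\kappa$. *)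

From mathcomp Require Import all_boot all_algebra.
Set Implicit Arguments. Unset Strict Implicit. Unset Printing Implicit Defensive.
Import GRing.Theory.
Local Open Scope ring_scope.

Definition midx (n d : nat) := {ffun 'I_d -> 'I_n}.

(* Size n^d of the index set (equal to n ^ d by card_ffun). *)
Definition nd (n d : nat) : nat := #|{ffun 'I_d -> 'I_n}|.

Definition midx_of (n d : nat) (i : 'I_(nd n d)) : midx n d :=
  @enum_val {ffun 'I_d -> 'I_n} predT i.
Definition ord_of (n d : nat) (a : midx n d) : 'I_(nd n d) :=
  @enum_rank {ffun 'I_d -> 'I_n} a.

Definition kronmx (F : fieldType) (n d : nat) (B : 'I_d -> 'M[F]_n) : 'M[F]_(nd n d) :=
  \matrix_(i, j) \prod_(k < d) B k (midx_of i k) (midx_of j k).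

(* Partial transpose M^{T_kappa}: swaps the k-th row index with the k-th column
   index for every k in kappa. *)
Definition ptrmx (F : fieldType) (n d : nat) (kappa : {set 'I_d})
    (M : 'M[F]_(nd n d)) : 'M[F]_(nd n d) :=
  \matrix_(i, j)
    let a := midx_of i in
    let b := midx_of j in
    M (ord_of [ffun k => if k \in kappa then b k else a k])
      (ord_of [ffun k => if k \in kappa then a k else b k]).

From mathcomp Require Import all_boot all_algebra.
Import GRing.Theory.
Local Open Scope ring_scope.

(* Write [mix u v] for the multi-index agreeing with [u] on kappa and with [v]
   off kappa, so that [M^{T_kappa} (a, b) = M (mix b a, mix a b)].  In the
   double sum for [(L M^{T_kappa} R) (a, b)] over [(y, x)], substitute
   [(c, e) = (mix x y, mix y x)], an involution of pairs of multi-indices: each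
   term becomes [prod_k B_k (mix b a k) (c k) * [e = mix a b] * M (c, e)], the
   factor [B_k] coming from [R_k = B_k^T] on kappa and from [L_k = B_k] off it.
   Summing over [e] leaves [(P M) (mix b a, mix a b)].  For the rank, Kronecker
   products of nonsingular matrices are nonsingular (mixed-product rule). *)

Lemma prod_eqb_ffun (R : comPzSemiRingType) (I : finType) (T : eqType)
    (e f : {ffun I -> T}) :
  \prod_(i : I) ((e i == f i)%:R : R) = (e == f)%:R.
Proof.
have [->|neq_ef] := eqVneq e f; first by rewrite big1 // => i _; rewrite eqxx.
have [i neq_i] : exists i, e i != f i.
  apply/existsP; apply: contraNT neq_ef => /existsPn eq_ef.
  by apply/eqP/ffunP => i; apply/eqP/negPn/eq_ef.
by rewrite (bigD1 i) //= (negbTE neq_i) mul0r.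
Qed.

Lemma mxrank_mul_unit (F : fieldType) m n (A : 'M[F]_m) (X : 'M[F]_(m, n))
    (C : 'M[F]_n) :
  A \in unitmx -> C \in unitmx -> \rank (A *m X *m C) = \rank X.
Proof.
move=> unitA unitC.
by rewrite mxrankMfree ?row_free_unit // eqmxMfull ?row_full_unit.
Qed.

Section MultiIndex.

Variables n d : nat.

Lemma midx_ofK : cancel (@ord_of n d) (@midx_of n d).
Proof. exact: enum_rankK. Qed.

Lemma ord_ofK : cancel (@midx_of n d) (@ord_of n d).
Proof. exact: enum_valK. Qed.

Lemma big_midx (R : Type) (idx : R) (op : Monoid.com_law idx)
    (G : 'I_(nd n d) -> R) :
  \big[op/idx]_(i < nd n d) G i = \big[op/idx]_(a : midx n d) G (ord_of a).
Proof.
by apply: (reindex (@ord_of n d)); exists (@midx_of n d) => ? _;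
  [apply: midx_ofK | apply: ord_ofK].
Qed.

Lemma matrix_midxP (R : Type) (A C : 'M[R]_(nd n d)) :
  (forall a b : midx n d, A (ord_of a) (ord_of b) = C (ord_of a) (ord_of b)) ->
  A = C.
Proof.
by move=> eqAC; apply/matrixP => i j; have := eqAC (midx_of i) (midx_of j);
  rewrite !ord_ofK.
Qed.

Definition mix (kappa : {set 'I_d}) (u v : midx n d) : midx n d :=
  [ffun k => if k \in kappa then u k else v k].

Lemma mixK (kappa : {set 'I_d}) (u v : midx n d) :
  mix kappa (mix kappa u v) (mix kappa v u) = u.
Proof. by apply/ffunP => k; rewrite !ffunE; case: (k \in kappa). Qed.

End MultiIndex.

Arguments mix {n d} kappa u v.

Section Kronecker.

Variables (F : fieldType) (n d : nat).
Implicit Types (B C : 'I_d -> 'M[F]_n) (M : 'M[F]_(nd n d)).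

Lemma kronmxE B (a b : midx n d) :
  kronmx B (ord_of a) (ord_of b) = \prod_(k < d) B k (a k) (b k).
Proof. by rewrite mxE !midx_ofK. Qed.

Lemma eq_kronmx B C : B =1 C -> kronmx B = kronmx C.
Proof.
by move=> eqBC; apply: matrix_midxP => a b; rewrite !kronmxE;
  apply: eq_bigr => k _; rewrite (eqBC k).
Qed.

Lemma kronmx1 : kronmx (fun _ : 'I_d => 1%:M : 'M[F]_n) = 1%:M.
Proof.
apply: matrix_midxP => a b; rewrite kronmxE [RHS]mxE.
under eq_bigr do rewrite mxE.
by rewrite prod_eqb_ffun (inj_eq (can_inj (@midx_ofK n d))).
Qed.

Lemma kronmx_mul B C : kronmx B *m kronmx C = kronmx (fun k => B k *m C k).
Proof.
apply: matrix_midxP => a b; rewrite mxE kronmxE big_midx.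
under eq_bigr do rewrite !kronmxE -big_split.
rewrite -(bigA_distr_bigA (fun k t => B k (a k) t * C k t (b k))).
by apply: eq_bigr => k _; rewrite mxE.
Qed.

Lemma kronmx_unit B : (forall k, B k \in unitmx) -> kronmx B \in unitmx.
Proof.
move=> unitB.
have mulmxV_kron : kronmx B *m kronmx (fun k => invmx (B k)) = 1%:M.
  by rewrite kronmx_mul -kronmx1; apply: eq_kronmx => k; rewrite mulmxV.
by case/mulmx1_unit: mulmxV_kron.
Qed.

Lemma ptrmxE (kappa : {set 'I_d}) M (a b : midx n d) :
  ptrmx kappa M (ord_of a) (ord_of b) =
    M (ord_of (mix kappa b a)) (ord_of (mix kappa a b)).
Proof. by rewrite mxE !midx_ofK. Qed.

Variables (B : 'I_d -> 'M[F]_n) (kappa : {set 'I_d}).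

Definition ptr_left := kronmx (fun k => if k \in kappa then 1%:M else B k).
Definition ptr_right := kronmx (fun k => if k \in kappa then (B k)^T else 1%:M).

Lemma ptr_left_rightE (a b c e : midx n d) :
  ptr_left (ord_of a) (ord_of (mix kappa e c)) *
    ptr_right (ord_of (mix kappa c e)) (ord_of b) =
  \prod_(k < d) B k (mix kappa b a k) (c k) * (e == mix kappa a b)%:R.
Proof.
rewrite !kronmxE -prod_eqb_ffun -!big_split /=; apply: eq_bigr => k _.
by rewrite !ffunE; case: (k \in kappa); rewrite !mxE // mulrC eq_sym.
Qed.

Lemma ptrmx_kron_mul M :
  ptrmx kappa (kronmx B *m M) = ptr_left *m ptrmx kappa M *m ptr_right.
Proof.
apply: matrix_midxP => a b; rewrite ptrmxE !mxE !big_midx.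
under [RHS]eq_bigr do rewrite mxE big_midx mulr_suml.
rewrite pair_bigA /=.
rewrite (reindex (fun q => (mix kappa q.1 q.2, mix kappa q.2 q.1))) /=;
  last by apply: onW_bij; apply: inv_bij => -[u v] /=; rewrite !mixK.
under eq_bigr do rewrite ptrmxE !mixK mulrAC ptr_left_rightE.
rewrite -(pair_bigA _ (fun c e : midx n d =>
  \prod_(k < d) B k (mix kappa b a k) (c k) * (e == mix kappa a b)%:R *
    M (ord_of c) (ord_of e))) /=.
apply: eq_bigr => c _; rewrite kronmxE (bigD1 (mix kappa a b)) //= eqxx mulr1.
by rewrite [X in _ + X]big1 ?addr0 // => e /negbTE ->; rewrite mulr0 mul0r.
Qed.

Lemma mxrank_ptrmx_kron_mul M :
  (forall k, B k \in unitmx) ->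
  \rank (ptrmx kappa (kronmx B *m M)) = \rank (ptrmx kappa M).
Proof.
move=> unitB; rewrite ptrmx_kron_mul mxrank_mul_unit //;
  by apply: kronmx_unit => k; case: (k \in kappa); rewrite ?unitmx_tr ?unitmx1.
Qed.

End Kronecker.

Theorem lemma3p9 (F : fieldType) (n d : nat) (B : 'I_d -> 'M[F]_n)
    (M : 'M[F]_(nd n d)) (kappa : {set 'I_d}) :
  ptrmx kappa (kronmx B *m M) =
    kronmx (fun k => if k \in kappa then 1%:M else B k) *m ptrmx kappa M
      *m kronmx (fun k => if k \in kappa then (B k)^T else 1%:M)
  /\ ((forall k, B k \in unitmx) ->
      \rank (ptrmx kappa (kronmx B *m M)) = \rank (ptrmx kappa M)).
Proof.
split; first exact: ptrmx_kron_mul.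
exact: mxrank_ptrmx_kron_mul.
Qed.
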